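(* Let $(\mathcal{X},\rho)$ be a length space and $\eta:\mathcal{X}\to\mathcal{Y}$ a function. Then for every $x\in\mathcal{X}$, $\mathrm{margin}_\eta(x)=\rho(x,\partial_\eta\mathcal{X})$.
   Context: A length space: $\rho(x,x')=\inf_\gamma\ell(\gamma)$ over continuous paths $\gamma:[0,1]\to\mathcal{X}$ from $x$ to $x'$, $\ell(\gamma)$ denoting path length. $\mathrm{margin}_\eta(x)=\inf\{\rho(x,x'):\eta(x')\ne\eta(x)\}$, $\partial_\eta\mathcal{X}=\{x:\mathrm{margin}_\eta(x)=0\}$, and $\rho(x,Z)=\inf_{z\in Z}\rho(x,z)$. *)

(* R : realType, extended reals \bar R for infima
   (so that inf of the empty set is +oo). *)
From HB Require Import structures.
From mathcomp Require Import all_boot all_order all_algebra.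
From mathcomp Require Import all_classical all_reals all_analysis.
Set Implicit Arguments. Unset Strict Implicit. Unset Printing Implicit Defensive.
Import Order.TTheory GRing.Theory Num.Theory.
Local Open Scope classical_set_scope.
Local Open Scope ring_scope.

Section LengthSpace.
Variables (R : realType) (X : Type).

Definition is_metric (rho : X -> X -> R) : Prop :=
  (forall x y, 0 <= rho x y) /\
  (forall x y, rho x y = 0 <-> x = y) /\
  (forall x y, rho x y = rho y x) /\
  (forall x y z, rho x z <= rho x y + rho y z).

Definition cont01 (rho : X -> X -> R) (g : R -> X) : Prop :=
  forall t, 0 <= t <= 1 -> forall e : R, 0 < e ->
    exists2 d : R, 0 < d & forall s, 0 <= s <= 1 -> `|s - t| < d ->
      rho (g s) (g t) < e.

Definition is_path (rho : X -> X -> R) (g : R -> X) (x x' : X) : Prop :=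
  cont01 rho g /\ g 0 = x /\ g 1 = x'.

Definition partition01 (n : nat) (t : nat -> R) : Prop :=
  t 0%N = 0 /\ t n = 1 /\ (forall i, (i < n)%N -> t i <= t i.+1).

Definition path_length (rho : X -> X -> R) (g : R -> X) : \bar R :=
  ereal_sup [set (\sum_(i < nt.1) rho (g (nt.2 i)) (g (nt.2 i.+1)))%:E
            | nt in [set nt : nat * (nat -> R) | partition01 nt.1 nt.2]].

Definition length_space (rho : X -> X -> R) : Prop :=
  is_metric rho /\
  forall x x', (rho x x')%:E =
    ereal_inf [set path_length rho g | g in [set g | is_path rho g x x']].

Definition dist_set (rho : X -> X -> R) (x : X) (Z : set X) : \bar R :=
  ereal_inf [set (rho x z)%:E | z in Z].

Definition margin (Y : Type) (rho : X -> X -> R) (eta : X -> Y) (x : X)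
  : \bar R :=
  dist_set rho x [set x' | eta x' <> eta x].

Definition boundary (Y : Type) (rho : X -> X -> R) (eta : X -> Y) : set X :=
  [set x | margin rho eta x = 0%E].

End LengthSpace.

(* A point of a path from x to a point x' with a different label where the label
   first changes lies on the boundary, and (length space) that path can be chosen
   of length at most rho(x,x') + e; this gives margin(x) >= rho(x, boundary).
   Conversely, a boundary point z is approached by points labelled differently
   from z, so margin(x) <= rho(x,z) by the triangle inequality. *)
From mathcomp Require Import all_boot all_order all_algebra.
From mathcomp Require Import all_classical all_reals all_analysis.
From Stdlib Require Import Classical.
From mathcomp Require Import lra.
Set Implicit Arguments. Unset Strict Implicit. Unset Printing Implicit Defensive.
Import Order.TTheory GRing.Theory Num.Theory.
Local Open Scope classical_set_scope.
Local Open Scope ring_scope.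

Section ChangePoint.
Variables (R : realType) (Y : Type) (f : R -> Y).

Definition constant_prefix : set R :=
  [set t | 0 <= t <= 1 /\ forall s, 0 <= s <= t -> f s = f 0].

Let tau := sup constant_prefix.

Lemma constant_prefix0 : constant_prefix 0.
Proof.
split=> [|s /andP[s0 s1]]; first by rewrite lexx ler01.
by have -> : s = 0 by apply/le_anti; rewrite s0 s1.
Qed.

Lemma has_sup_constant_prefix : has_sup constant_prefix.
Proof. by split; [exists 0; exact: constant_prefix0 | exists 1 => t [/andP[]]]. Qed.

Lemma sup_constant_prefix_ge0 : 0 <= tau.
Proof. exact: (sup_upper_bound has_sup_constant_prefix constant_prefix0). Qed.

Lemma sup_constant_prefix_le1 : tau <= 1.
Proof. by apply: ge_sup; [exists 0; exact: constant_prefix0 | move=> t [/andP[]]]. Qed.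

Lemma constant_before_sup s : 0 <= s -> s < tau -> f s = f 0.
Proof.
move=> s0 s_tau.
have [t [_ ft] t_gt] :=
  sup_adherent (eps := tau - s) ltac:(by rewrite subr_gt0) has_sup_constant_prefix.
by apply: ft; rewrite s0 /=; rewrite -/tau in t_gt; lra.
Qed.

Lemma change_near_sup_constant_prefix (f10 : f 1 <> f 0) d : 0 < d ->
  exists2 s, 0 <= s <= 1 & `|s - tau| < d /\ f s <> f tau.
Proof.
move=> d0; have tau0 := sup_constant_prefix_ge0; have tau1 := sup_constant_prefix_le1.
have [ftau|ftau] := classic (f tau = f 0); last first.
  have tau_gt0 : 0 < tau.
    by rewrite lt_neqAle tau0 andbT; apply: contra_notN ftau => /eqP <-.
  pose s := Num.max 0 (tau - d / 2).
  have s_ge : tau - d / 2 <= s by rewrite le_max lexx orbT.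
  have s_lt : s < tau by rewrite gt_max; apply/andP; split; lra.
  exists s; first by apply/andP; split; [rewrite le_max lexx | lra].
  split; first by rewrite ler0_norm; lra.
  by rewrite constant_before_sup ?le_max ?lexx // => /esym.
have tau_lt1 : tau < 1.
  by rewrite lt_neqAle tau1 andbT; apply: contra_notN f10 => /eqP <-.
apply: NNPP => no_change.
pose d' := Num.min (d / 2) (1 - tau).
have d'_gt0 : 0 < d' by rewrite lt_min; apply/andP; split; lra.
have d'_le : d' <= d / 2 /\ d' <= 1 - tau by split; rewrite ge_min lexx ?orbT.
suff : constant_prefix (tau + d').
  by move/(sup_upper_bound has_sup_constant_prefix); rewrite -/tau; lra.
split=> [|s /andP[s0 s1]]; first by apply/andP; split; lra.
case: (ltgtP s tau) => [s_lt|s_gt|->] //; first exact: constant_before_sup.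
rewrite -ftau; apply: NNPP => fs; apply: no_change; exists s.
  by apply/andP; split; lra.
by split=> //; rewrite gtr0_norm; lra.
Qed.

Lemma exists_change_point01 : f 1 <> f 0 -> exists2 t, 0 <= t <= 1 &
  forall d, 0 < d -> exists2 s, 0 <= s <= 1 & `|s - t| < d /\ f s <> f t.
Proof.
move=> f10; exists tau; last exact: change_near_sup_constant_prefix.
by rewrite sup_constant_prefix_ge0 sup_constant_prefix_le1.
Qed.

End ChangePoint.

Section Margin.
Variables (R : realType) (X Y : Type) (rho : X -> X -> R) (eta : X -> Y).

Lemma margin_ge0 (hm : is_metric rho) z : (0 <= margin rho eta z)%E.
Proof. by apply/ereal_infP => _ [w _ <-]; rewrite lee_fin; exact: hm.1. Qed.

Lemma boundary_approx (hm : is_metric rho) z :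
  (forall e, 0 < e -> exists2 w, eta w <> eta z & rho z w < e) ->
  boundary rho eta z.
Proof.
move=> near_z; apply/le_anti; rewrite margin_ge0 // andbT.
apply/lee_addgt0Pr => e e0; rewrite add0e.
have [w etaw zw] := near_z e e0.
apply: le_trans (ereal_inf_lbound _) _; first by exists w.
by rewrite lee_fin ltW.
Qed.

Lemma margin_le_dist_boundary (hm : is_metric rho) x z :
  boundary rho eta z -> (margin rho eta x <= (rho x z)%:E)%E.
Proof.
move=> Bz; have [etaz|etaz] := classic (eta z = eta x); last first.
  by apply: ereal_inf_lbound; exists z.
apply/lee_addgt0Pr => e e0.
have : (margin rho eta z < e%:E)%E by rewrite Bz lte_fin.
move=> /ereal_inf_lt [_ [w etaw <-]]; rewrite lte_fin => zw.
apply: le_trans (ereal_inf_lbound _) _; first by exists w => //=; rewrite -etaz.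
by rewrite -EFinD lee_fin; apply: le_trans (hm.2.2.2 x z w) _; lra.
Qed.

Lemma path_meets_boundary (hm : is_metric rho) g :
  cont01 rho g -> eta (g 1) <> eta (g 0) ->
  exists2 t, 0 <= t <= 1 & boundary rho eta (g t).
Proof.
move=> gc /(@exists_change_point01 _ _ (eta \o g)) [t t01 change]; exists t => //.
apply: boundary_approx => // e e0.
have [d d0 gd] := gc t t01 e e0.
have [s s01 [st etas]] := change d d0.
by exists (g s) => //; rewrite hm.2.2.1; apply: gd.
Qed.

Lemma split_le_path_length g t : 0 <= t <= 1 ->
  ((rho (g 0) (g t) + rho (g t) (g 1))%:E <= path_length rho g)%E.
Proof.
move=> /andP[t0 t1].
pose p i : R := if i is 0%N then 0 else if i is 1%N then t else 1.
have -> : rho (g 0) (g t) + rho (g t) (g 1) = \sum_(i < 2) rho (g (p i)) (g (p i.+1)).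
  by rewrite big_ord_recr big_ord_recr big_ord0 /= add0r.
apply: ereal_sup_ubound; exists (2%N, p) => //.
by split=> //; split=> // -[|[|]] //= _; lra.
Qed.

Lemma boundary_near_path (hL : length_space rho) x x' e :
  eta x' <> eta x -> 0 < e ->
  exists2 z, boundary rho eta z & rho x z <= rho x x' + e.
Proof.
move=> etax' e0; have [hm hl] := hL.
have : (ereal_inf [set path_length rho g | g in [set g | is_path rho g x x']]
          < (rho x x' + e)%:E)%E by rewrite -hl lte_fin; lra.
move=> /ereal_inf_lt [_ [g [gc [g0 g1]] <-]] short_g.
have [t t01 Bgt] : exists2 t, 0 <= t <= 1 & boundary rho eta (g t).
  by apply: path_meets_boundary; rewrite ?g0 ?g1.
exists (g t) => //.
have := le_lt_trans (split_le_path_length g t01) short_g.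
by rewrite g0 g1 lte_fin; have := hm.1 (g t) x'; lra.
Qed.

End Margin.

Theorem lemma9 (R : realType) (X Y : Type) (rho : X -> X -> R)
  (eta : X -> Y) (hL : length_space rho) :
  forall x : X, margin rho eta x = dist_set rho x (boundary rho eta).
Proof.
move=> x; apply/le_anti/andP; split.
  by apply/ereal_infP => _ [z Bz <-]; exact: margin_le_dist_boundary hL.1 _ _ Bz.
apply/ereal_infP => _ [x' etax' <-]; apply/lee_addgt0Pr => e e0.
have [z Bz xz] := boundary_near_path hL etax' e0.
apply: le_trans (ereal_inf_lbound _) _; first by exists z.
by rewrite -EFinD lee_fin.
Qed.
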